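(* Let $\mathfrak{F}=(Z_1,Z_\partial,I,R_\Diamond,R_\Box,R_\triangledown,T)$ be a frame (in the sense of the context). Define $\blacktriangledown:\mathcal{P}(Z_1)\to\mathcal{P}(Z_\partial)$ and $\boxtimes:\mathcal{P}(Z_\partial)\to\mathcal{P}(Z_1)$ by $\blacktriangledown U=\{y\in Z_\partial\mid \exists x\in Z_1\,(y R_\triangledown x \wedge x\in U)\}$ and $\boxtimes V=\{x\in Z_1\mid \forall y\in Z_\partial\,(x R''_\triangledown y\to y\in V)\}$, and for a stable set $A$ let $\triangledown A=(\blacktriangledown A)'$. Then for every Galois stable set $A\subseteq Z_1$ and every Galois co-stable set $B\subseteq Z_\partial$: $$(\blacktriangledown A)'=\triangledown A=\boxtimes A' \qquad\text{and}\qquad \triangledown B'=\boxtimes B=(\blacktriangledown B')'.$$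
   Context: A frame is a tuple $\mathfrak{F}=(Z_1,Z_\partial,I,R_\Diamond,R_\Box,R_\triangledown,T)$ where $Z_1,Z_\partial$ are nonempty sets, $I\subseteq Z_1\times Z_\partial$, $R_\Diamond\subseteq Z_1\times Z_1$, $R_\Box\subseteq Z_\partial\times Z_\partial$, $R_\triangledown\subseteq Z_\partial\times Z_1$ and $T\subseteq Z_\partial\times Z_1\times Z_\partial$. Write $x\nmid y$ iff not $xIy$. For $U\subseteq Z_1$ put $U'=\{y\in Z_\partial\mid \forall u\in U\; u\nmid y\}$ and for $V\subseteq Z_\partial$ put $V'=\{x\in Z_1\mid\forall v\in V\; x\nmid v\}$; $U$ is (Galois) stable iff $U''=U$, $V$ is co-stable iff $V''=V$. On each sort define $u\le w$ iff $\{u\}'\subseteq\{w\}'$; the frame is separated iff $\le$ is antisymmetric. Galois dual relations: $yR'_\Diamond z$ iff $\forall x\,(xR_\Diamond z\to x\nmid y)$ (for $y\in Z_\partial,z\in Z_1$); $xR'_\Box v$ iff $\forall y\,(yR_\Box v\to x\nmid y)$ (for $x\in Z_1,v\in Z_\partial$); $zR'_\triangledown x$ iff $\forall y\in Z_\partial\,(yR_\triangledown x\to z\nmid y)$ (for $z,x\in Z_1$); $xT'zv$ iff $\forall y\,(yTzv\to x\nmid y)$ (for $x,z\in Z_1$, $v\in Z_\partial$). A relation among $R'_\Diamond,R'_\Box,R'_\triangledown,T'$ is smooth iff every set obtained by fixing all but one of its argument places is stable (if it is a subset of $Z_1$) or co-stable (if a subset of $Z_\partial$). Frames are assumed separated with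 all four of these relations smooth. The double dual $R''_\triangledown\subseteq Z_1\times Z_\partial$ is defined by $xR''_\triangledown y$ iff $\forall z\in Z_1\,(xR'_\triangledown z\to z\nmid y)$. *)

Set Implicit Arguments.

Definition pset (T : Type) := T -> Prop.

Record frame := Frame {
  Z1 : Type;
  Zd : Type;
  Z1_nonempty : inhabited Z1;
  Zd_nonempty : inhabited Zd;
  I : Z1 -> Zd -> Prop;
  RDia : Z1 -> Z1 -> Prop;
  RBox : Zd -> Zd -> Prop;
  RTri : Zd -> Z1 -> Prop;
  TRel : Zd -> Z1 -> Zd -> Prop
}.

Section FrameDefs.
Variable F : frame.

Definition nI (x : Z1 F) (y : Zd F) : Prop := ~ I F x y.

Definition primeU (U : pset (Z1 F)) : pset (Zd F) :=
  fun y => forall u, U u -> nI u y.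
Definition primeV (V : pset (Zd F)) : pset (Z1 F) :=
  fun x => forall v, V v -> nI x v.

Definition stable (U : pset (Z1 F)) : Prop := primeV (primeU U) = U.
Definition costable (V : pset (Zd F)) : Prop := primeU (primeV V) = V.

Definition single {T : Type} (a : T) : pset T := fun t => t = a.
Definition psubset {T : Type} (A B : pset T) : Prop := forall t, A t -> B t.

Definition le1 (u w : Z1 F) : Prop := psubset (primeU (single u)) (primeU (single w)).
Definition led (u w : Zd F) : Prop := psubset (primeV (single u)) (primeV (single w)).

Definition separated : Prop :=
  (forall u w : Z1 F, le1 u w -> le1 w u -> u = w) /\
  (forall u w : Zd F, led u w -> led w u -> u = w).

Definition RDia' (y : Zd F) (z : Z1 F) : Prop :=
  forall x, RDia F x z -> nI x y.
Definition RBox' (x : Z1 F) (v : Zd F) : Prop :=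
  forall y, RBox F y v -> nI x y.
Definition RTri' (z x : Z1 F) : Prop :=
  forall y : Zd F, RTri F y x -> nI z y.
Definition T' (x z : Z1 F) (v : Zd F) : Prop :=
  forall y, TRel F y z v -> nI x y.

Definition smooth_RDia' : Prop :=
  (forall y, stable (fun z => RDia' y z)) /\
  (forall z, costable (fun y => RDia' y z)).
Definition smooth_RBox' : Prop :=
  (forall x, costable (fun v => RBox' x v)) /\
  (forall v, stable (fun x => RBox' x v)).
Definition smooth_RTri' : Prop :=
  (forall z, stable (fun x => RTri' z x)) /\
  (forall x, stable (fun z => RTri' z x)).
Definition smooth_T' : Prop :=
  (forall x z, costable (fun v => T' x z v)) /\
  (forall x v, stable (fun z => T' x z v)) /\
  (forall z v, stable (fun x => T' x z v)).

Definition good_frame : Prop :=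
  separated /\ smooth_RDia' /\ smooth_RBox' /\ smooth_RTri' /\ smooth_T'.

Definition RTri'' (x : Z1 F) (y : Zd F) : Prop :=
  forall z : Z1 F, RTri' x z -> nI z y.

Definition bdown (U : pset (Z1 F)) : pset (Zd F) :=
  fun y => exists x, RTri F y x /\ U x.
Definition boxt (V : pset (Zd F)) : pset (Z1 F) :=
  fun x => forall y, RTri'' x y -> V y.
Definition tdown (A : pset (Z1 F)) : pset (Z1 F) := primeV (bdown A).

End FrameDefs.

Arguments primeU {F} U _.
Arguments primeV {F} V _.
Arguments stable {F} U.
Arguments costable {F} V.
Arguments bdown {F} U _.
Arguments boxt {F} V _.
Arguments tdown {F} A _.

(** Both [triangledown A] and [boxtimes A'] are sets of points [x] whose
    section [R'_triangledown x] is compared with [A]: the first asks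
    [A ⊆ R'_triangledown x], the second [(R'_triangledown x)' ⊆ A'].  By
    smoothness the section is stable, and between stable sets the Galois map
    [U ↦ U'] reflects as well as reverses inclusion, so the two conditions
    agree.  The identities for a co-stable [B] are the case [A := B']. *)
From Stdlib Require Import FunctionalExtensionality PropExtensionality.

Lemma pset_ext {T : Type} (P Q : pset T) : (forall t, P t <-> Q t) -> P = Q.
Proof.
  intros HPQ; apply functional_extensionality; intros t.
  apply propositional_extensionality; apply HPQ.
Qed.

Section Galois.
Variable F : frame.

Lemma primeU_antitone (U W : pset (Z1 F)) :
  psubset U W -> psubset (primeU W) (primeU U).
Proof. intros HUW y Hy u Hu; apply Hy, HUW, Hu. Qed.

Lemma primeV_antitone (V W : pset (Zd F)) :
  psubset V W -> psubset (primeV W) (primeV V).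
Proof. intros HVW x Hx v Hv; apply Hx, HVW, Hv. Qed.

Lemma subset_primeVU (U : pset (Z1 F)) : psubset U (primeV (primeU U)).
Proof. intros x Hx y Hy; apply Hy, Hx. Qed.

Lemma stable_primeV (V : pset (Zd F)) : stable (primeV V).
Proof.
  apply pset_ext; intros x; split.
  - intros Hx v Hv; apply Hx; intros u Hu; apply Hu, Hv.
  - apply subset_primeVU.
Qed.

Lemma subset_stable_iff (U W : pset (Z1 F)) :
  stable W -> (psubset U W <-> psubset (primeU W) (primeU U)).
Proof.
  intros HW; split.
  - apply primeU_antitone.
  - intros HWU x Hx; rewrite <- HW.
    apply (primeV_antitone _ _ HWU), subset_primeVU, Hx.
Qed.

End Galois.

Section Triangledown.
Variable F : frame.

Lemma tdownE (A : pset (Z1 F)) : tdown A = fun x => psubset A (RTri' F x).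
Proof.
  apply pset_ext; intros x; split.
  - intros Hx x' Hx' y Hy; apply Hx; exists x'; split; assumption.
  - intros HA y [x' [Hy Hx']]; apply (HA x' Hx' y Hy).
Qed.

Lemma boxt_primeUE (A : pset (Z1 F)) :
  boxt (primeU A) = fun x => psubset (primeU (RTri' F x)) (primeU A).
Proof. reflexivity. Qed.

Hypothesis stable_RTri' : forall z, stable (RTri' F z).

Lemma tdown_boxt_primeU (A : pset (Z1 F)) :
  stable A -> tdown A = boxt (primeU A).
Proof.
  intros HA; rewrite tdownE, boxt_primeUE.
  apply pset_ext; intros x; apply subset_stable_iff, stable_RTri'.
Qed.

End Triangledown.

Theorem proposition2p17 (F : frame) (HF : good_frame F)
  (A : pset (Z1 F)) (B : pset (Zd F)) (HA : stable A) (HB : costable B) :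
  (primeV (bdown A) = tdown A /\ tdown A = boxt (primeU A)) /\
  (tdown (primeV B) = boxt B /\ boxt B = primeV (bdown (primeV B))).
Proof.
  destruct HF as [_ [_ [_ [[stable_RTri' _] _]]]].
  assert (HB' : tdown (primeV B) = boxt B).
  { rewrite <- HB at 2; apply tdown_boxt_primeU, stable_primeV; assumption. }
  split; split.
  - reflexivity.
  - apply tdown_boxt_primeU; assumption.
  - exact HB'.
  - rewrite <- HB'; reflexivity.
Qed.
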